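(* Let $q$ be a prime power, $n$ a positive integer, $L(x)=\sum_{i=0}^{n-1}a_ix^{q^{2i}}$ with $a_i\in\mathbb F_{q^{2n}}$, and let $r=n-\dim\ker(L^*+L)$. Then \[\mathcal S(L)=\sum_{u\in\mathbb F_{q^{2n}}}\psi(\rho_L(u))=(-1)^rq^{2n-r}.\]
   Context: $\mathrm{Tr}$ is the trace $\mathbb F_{q^{2n}}\to\mathbb F_{q^2}$; $\sigma_L(u,v)=\mathrm{Tr}(uL(v^q))$; $\rho_L(u)=\sigma_L(u,u)^q+\sigma_L(u,u)\in\mathbb F_q$. $\psi$ is the canonical additive character of $\mathbb F_q$. $L^*(x)=\sum_{i=0}^{n-1}(a_i^qx)^{q^{2(n-i-1)}}$. Kernels are of the induced $\mathbb F_{q^2}$-linear maps on $\mathbb F_{q^{2n}}$, dimensions over $\mathbb F_{q^2}$. *)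

From HB Require Import structures.
From mathcomp Require Import all_boot all_order all_algebra all_field.
Set Implicit Arguments. Unset Strict Implicit. Unset Printing Implicit Defensive.
Import GRing.Theory Num.Theory.
Local Open Scope ring_scope.

(* Setting: F = F_{q^2} (a finite field of order q^2), K = F_{q^{2n}} given as
   a field extension of F of dimension n.  All maps below are on K. *)

Section Defs.
Variables (F : fieldType) (K : fieldExtType F).

Definition Lpoly (q n : nat) (a : 'I_n -> K) (x : K) : K :=
  \sum_(i < n) a i * x ^+ (q ^ (2 * i)).

Definition Lstar (q n : nat) (a : 'I_n -> K) (x : K) : K :=
  \sum_(i < n) (a i ^+ q * x) ^+ (q ^ (2 * (n - i - 1))).

Definition Tr (q n : nat) (x : K) : K := \sum_(j < n) x ^+ (q ^ (2 * j)).

Definition sigmaL (q n : nat) (a : 'I_n -> K) (u v : K) : K :=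
  Tr q n (u * Lpoly q a (v ^+ q)).

Definition rhoL (q n : nat) (a : 'I_n -> K) (u : K) : K :=
  sigmaL q a u u ^+ q + sigmaL q a u u.

Definition absTr (p k : nat) (y : K) : K := \sum_(j < k) y ^+ (p ^ j).

(* the canonical additive character of F_q (q = p^k):
   psi(y) = exp(2 pi i Tr_{F_q/F_p}(y) / p), where Tr_{F_q/F_p}(y) = m%:R with
   0 <= m < p; exp(2 pi i / p) = (p.-root (-1))^+2 in algC *)
Definition omega (p : nat) : algC := (p.-root (-1)) ^+ 2.

Definition psi (p k : nat) (y : K) : algC :=
  \sum_(m < p) (if absTr p k y == m%:R then omega p ^+ m else 0).

Definition kerLL (q n : nat) (a : 'I_n -> K) : {vspace K} :=
  lker (linfun (fun x : K => Lstar q a x + Lpoly q a x)).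

End Defs.

(* Let [trq] be the trace from K to F_q.  Then [rhoL u = trq (u * L (u ^ q))] is a
   quadratic form over F_q with polar form [(u, v) |-> trq (u * (L^* + L) (v ^ q))],
   because [L^*] is the adjoint of [L] for the trace form.  Its radical is the Frobenius
   preimage of [ker (L^* + L)], of order [q ^ (2 d)] with [d = dim ker (L^* + L)], and
   [rhoL] vanishes on it.  Since [rhoL (c u) = c ^ (q + 1) rhoL u] for [c] in F_{q^2}, a
   scalar of norm [-1] shows [S = sum_u psi (- rhoL u)], and orthogonality of characters
   gives [S ^ 2 = q ^ (2 n) q ^ (2 d)].  The [q + 1] scalars of norm 1 act freely on K^*
   and preserve [rhoL], so [S = 1] modulo [q + 1] in the algebraic integers; as [-q = 1]
   modulo [q + 1], this forces [S = (-q) ^ (n + d)]. *)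

From HB Require Import structures.
From mathcomp Require Import all_boot all_order all_algebra all_field.
From mathcomp Require Import cyclic zify ring.
Import GRing.Theory Num.Theory.
Local Open Scope ring_scope.
Set Implicit Arguments. Unset Strict Implicit. Unset Printing Implicit Defensive.

Section Frobenius.
Variables (R : comNzRingType) (p : nat).
Hypothesis pcharRp : p \in [pchar R].

(* The characteristic hypothesis is an argument so that [frobn] carries canonical
   ring morphism instances. *)
Definition frobn of p \in [pchar R] := fun (e : nat) (x : R) => x ^+ (p ^ e).

Lemma frobn_is_zmod_morphism e : zmod_morphism (frobn pcharRp e).
Proof.
elim: e => [|e IH] x y; first by rewrite /frobn expn0 !expr1.
rewrite /frobn expnS mulnC !exprM -!/(frobn pcharRp e _) IH.
by rewrite -!(pFrobenius_autE pcharRp) rmorphB.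
Qed.

Lemma frobn_is_monoid_morphism e : monoid_morphism (frobn pcharRp e).
Proof. by split; [rewrite /frobn expr1n | move=> x y; rewrite /frobn exprMn]. Qed.

HB.instance Definition _ e :=
  GRing.isZmodMorphism.Build R R (frobn pcharRp e) (frobn_is_zmod_morphism e).
HB.instance Definition _ e :=
  GRing.isMonoidMorphism.Build R R (frobn pcharRp e) (frobn_is_monoid_morphism e).

Lemma frobnK a b x : frobn pcharRp a (frobn pcharRp b x) = frobn pcharRp (b + a) x.
Proof. by rewrite /frobn -exprM -expnD. Qed.

End Frobenius.

Lemma sumr_ord_mul (V : nmodType) t m (f : nat -> V) :
  \sum_(l < t * m) f l = \sum_(i < t) \sum_(j < m) f (i * m + j)%N.
Proof.
elim: t => [|t IH]; first by rewrite mul0n !big_ord0.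
rewrite mulSnr big_split_ord /= IH big_ord_recr /=.
by congr (_ + _); apply: eq_bigr => j _.
Qed.

Lemma sumr_ord_shift (V : zmodType) m (f : nat -> V) :
  f m = f 0%N -> \sum_(i < m) f i.+1 = \sum_(i < m) f i.
Proof.
move=> fm; apply: (addIr (f 0%N)).
rewrite addrC -{2}fm -(big_ord_recr m (fun i => f i)) /=.
by rewrite (big_ord_recl m (fun i => f i)).
Qed.

Lemma sumr_ord_periodic (V : zmodType) t m (f : nat -> V) :
  (forall i, f (i + m)%N = f i) -> \sum_(l < t * m) f l = (\sum_(i < m) f i) *+ t.
Proof.
move=> fm; rewrite sumr_ord_mul.
have fim i j : f (i * m + j)%N = f j.
  by elim: i => [|i IH]; rewrite ?mul0n ?add0n // mulSn -addnA addnC fm IH.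
under eq_bigr => i _ do under eq_bigr => j _ do rewrite fim.
by rewrite sumr_const card_ord.
Qed.

Lemma exists_nonroot (R : idomainType) (P : {poly R}) (s : seq R) :
  P != 0 -> uniq s -> (size P <= size s)%N -> exists2 x, x \in s & ~~ root P x.
Proof.
move=> P0 us Ps; case: (boolP (all (root P) s)) => [Ps0|/allPn [x xs nPx]].
  by have := max_poly_roots P0 Ps0 us; rewrite ltnNge Ps.
by exists x.
Qed.

Lemma Aint_sqr_eq_sign (q m : nat) (S : algC) : (1 < q)%N ->
  (S == 1 %[mod q.+1])%A -> S ^+ 2 = (q ^ m)%:R ^+ 2 -> S = (- q%:R) ^+ m.
Proof.
move=> q_gt1 S1.
have -> : (q ^ m)%:R ^+ 2 = (- q%:R) ^+ m ^+ 2 :> algC.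
  by rewrite natrX -!exprM mulnC !exprM sqrrN.
have qm1 : ((- q%:R) ^+ m == 1 %[mod q.+1])%A.
  have q1 : (- q%:R == 1 %[mod q.+1])%A.
    by rewrite /eqAmod -opprD natr1 rpredN; have := eqAmodm0 q.+1; rewrite /eqAmod subr0.
  have Aq : - q%:R \in Aint by rewrite rpredN rpred_nat.
  elim: m => [|m IH]; rewrite ?expr0 // exprS.
  by have := eqAmodM Aq (rpred1 _) q1 IH; rewrite mulr1.
move/eqP; rewrite eqf_sqr => /orP [/eqP // | /eqP SN].
have : (1 == -1 %[mod q.+1])%A.
  by rewrite -(eqAmod_transl _ S1) SN eqAmodN opprK (eqAmod_transl _ qm1).
rewrite -(eqAmodDr _ 1) addNr -[1 + 1]/(2%N : Algebraics.divisor) eqAmod0_nat.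
by move=> /dvdn_leq /= /(_ isT); rewrite ltnS leqNgt q_gt1.
Qed.

Section AdditiveCharacter.
Variables (F : fieldType) (K : fieldExtType F) (p k : nat).
Hypotheses (p_pr : prime p) (pcharKp : p \in [pchar K]).

Lemma omega_expp : omega p ^+ p = 1.
Proof.
by rewrite /omega -exprM mulnC exprM rootCK ?prime_gt0 // sqrrN expr1n.
Qed.

Lemma omega_Aint : omega p \in Aint.
Proof. by apply: (Aint_unity_root (prime_gt0 p_pr)); rewrite unity_rootE omega_expp. Qed.

Lemma omega_neq1 : omega p != 1.
Proof.
rewrite /omega sqrf_eq1 negb_or; apply/andP; split; apply/eqP => r1.
  have := rootCK (prime_gt0 p_pr) (-1 : algC); rewrite r1 expr1n => /eqP.
  by rewrite -addr_eq0 -(natrD _ 1 1) pnatr_eq0.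
by have := rootC_lt0 (-1 : algC) (prime_gt1 p_pr); rewrite r1 oppr_lt0 ltr01.
Qed.

Lemma omega_expn_eq1 m : (omega p ^+ m == 1) = (p %| m)%N.
Proof.
have [d d_prim d_p] := prim_order_exists (prime_gt0 p_pr) omega_expp.
rewrite -(prim_order_dvd d_prim).
case/primeP: p_pr => _ /(_ d d_p) /orP [/eqP d1|/eqP -> //].
by move: (prim_expr_order d_prim); rewrite d1 expr1 => /eqP; rewrite (negbTE omega_neq1).
Qed.

Lemma absTr_is_zmod_morphism : zmod_morphism (absTr (K:=K) p k).
Proof.
move=> x y; rewrite /absTr -sumrB; apply: eq_bigr => j _.
by rewrite -!/(frobn pcharKp j _) rmorphB.
Qed.
HB.instance Definition _ :=
  GRing.isZmodMorphism.Build K K (absTr p k) absTr_is_zmod_morphism.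

Lemma absTr_frob1 (y : K) :
  frobn pcharKp k y = y -> frobn pcharKp 1 (absTr p k y) = absTr p k y.
Proof.
move=> yq; rewrite /absTr rmorph_sum /=.
under eq_bigr => j _ do rewrite -/(frobn pcharKp j y) frobnK addn1.
under [in RHS]eq_bigr => j _ do rewrite -/(frobn pcharKp j y).
exact: (@sumr_ord_shift _ k (fun j => frobn pcharKp j y)).
Qed.

Lemma natr_eq_pchar m m' :
  (m < p)%N -> (m' < p)%N -> (m%:R == m'%:R :> K) = (m == m').
Proof.
wlog le_mm' : m m' / (m <= m')%N.
  move=> wlog_le mp m'p; case: (leqP m m') => [|/ltnW] le; first exact: wlog_le.
  by rewrite eq_sym wlog_le // eq_sym.
move=> mp m'p; apply/idP/idP => [|/eqP -> //].
rewrite eq_sym -subr_eq0 -natrB // -(dvdn_pcharf pcharKp) => /dvdnP [c mc].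
by apply/eqP; case: c mc => [|c]; rewrite ?mul0n ?mulSn; lia.
Qed.

(* [absTr y] is a root of ['X^p - 'X], so it lies among the [p] roots [m%:R], [m < p]. *)
Lemma absTr_natr (y : K) : frobn pcharKp k y = y ->
  exists2 m, (m < p)%N & absTr p k y = m%:R.
Proof.
move=> yq; set x := absTr p k y; pose s := [seq (m%:R : K) | m <- iota 0 p].
case: (boolP (x \in s)) => [/mapP [m] | x_s]; first by rewrite mem_iota; exists m.
pose P : {poly K} := 'X^p - 'X.
have sizeP : size P = p.+1.
  by rewrite size_polyDl ?size_polyXn // size_polyN size_polyX ltnS prime_gt1.
have P_neq0 : P != 0 by rewrite -size_poly_eq0 sizeP.
have us : uniq (x :: s).
  rewrite /= x_s map_inj_in_uniq ?iota_uniq // => m m'.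
  by rewrite !mem_iota !add0n => mp m'p /eqP; rewrite natr_eq_pchar // => /eqP.
have [|w ws /negP []] := exists_nonroot P_neq0 us.
  by rewrite sizeP /= size_map size_iota.
have root_fixed (v : K) : frobn pcharKp 1 v = v -> root P v.
  by rewrite /root !hornerE /frobn expn1 => ->; rewrite subrr.
move: ws; rewrite inE => /orP [/eqP -> | /mapP [m _ ->]].
  by rewrite root_fixed ?absTr_frob1.
by rewrite root_fixed ?rmorph_nat.
Qed.

Lemma psiE (y : K) : frobn pcharKp k y = y ->
  exists m, [/\ (m < p)%N, absTr p k y = m%:R & psi p k y = omega p ^+ m].
Proof.
move=> yq; have [m mp trm] := absTr_natr yq; exists m; split => //.
rewrite /psi (bigD1 (Ordinal mp)) //= trm eqxx big1 ?addr0 // => j /eqP neq_jm.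
by rewrite natr_eq_pchar // ifN //; apply/eqP => mj; apply: neq_jm; apply: val_inj.
Qed.

Lemma psiD (x y : K) : frobn pcharKp k x = x -> frobn pcharKp k y = y ->
  psi p k (x + y) = psi p k x * psi p k y.
Proof.
move=> xq yq; have xyq : frobn pcharKp k (x + y) = x + y by rewrite rmorphD /= xq yq.
have [m1 [_ tr1 ->]] := psiE xq; have [m2 [_ tr2 ->]] := psiE yq.
have [m3 [m3p tr3 ->]] := psiE xyq.
rewrite -exprD -(expr_mod _ omega_expp) -[in RHS](expr_mod _ omega_expp).
have : (m3%:R : K) = ((m1 + m2) %% p)%:R.
  by rewrite (GRing.natr_mod_pchar pcharKp) natrD -tr1 -tr2 -tr3 raddfD.
by move/eqP; rewrite natr_eq_pchar ?ltn_pmod ?prime_gt0 // => /eqP ->; rewrite modn_mod.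
Qed.

Lemma psi0 : psi p k (0 : K) = 1.
Proof.
have [m [mp tr0 ->]] := psiE (rmorph0 _).
move/eqP: tr0; rewrite raddf0 eq_sym -[0]/(0%:R : K).
by rewrite natr_eq_pchar ?prime_gt0 // => /eqP ->.
Qed.

Lemma psi_neq1 (y : K) : frobn pcharKp k y = y -> absTr p k y != 0 -> psi p k y != 1.
Proof.
move=> yq; have [m [mp -> ->]] := psiE yq.
rewrite omega_expn_eq1; apply: contra => /dvdn_leq.
by case: m mp => // m mp /(_ isT); rewrite leqNgt mp.
Qed.

Lemma psi_Aint (y : K) : psi p k y \in Aint.
Proof.
rewrite /psi rpred_sum // => j _.
by case: ifP => _; [exact: rpredX omega_Aint | exact: rpred0].
Qed.

End AdditiveCharacter.

Section QuadraticForm.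
Variables (F : finFieldType) (K : fieldExtType F) (p k n : nat).
Hypotheses (p_pr : prime p) (pcharFp : p \in [pchar F]) (k_gt0 : (0 < k)%N)
  (n_gt0 : (0 < n)%N) (card_F : #|F| = ((p ^ k) ^ 2)%N) (dimK : \dim {: K} = n).
Variable a : 'I_n -> K.
Local Notation q := (p ^ k)%N.
Local Notation KF := (finvect_type K).

Lemma pcharKp : p \in [pchar K]. Proof. by rewrite (pchar_lalg K). Qed.
Local Notation frobq := (frobn pcharKp k).

Lemma q_gt1 : (1 < q)%N. Proof. by rewrite -(expn0 p) ltn_exp2l ?prime_gt1. Qed.

Lemma card_K : #|KF| = (q ^ (2 * n))%N.
Proof.
rewrite -(@card_vspacef F KF (Vector.class KF)) (@card_vspace F KF (Vector.class KF)).
rewrite card_F -expnM.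
by have -> : \dim (fullv : {vspace KF}) = n by exact: dimK.
Qed.

Lemma expq_frobn j (x : K) : x ^+ (q ^ j) = frobn pcharKp (k * j) x.
Proof. by rewrite /frobn expnM. Qed.

Lemma frobn_card (x : K) : frobn pcharKp (k * (2 * n)) x = x.
Proof. by rewrite -expq_frobn -card_K; exact: (expf_card (x : KF)). Qed.

Lemma frobn_id_mul e (x : K) :
  frobn pcharKp e x = x -> forall j, frobn pcharKp (e * j) x = x.
Proof. by move=> xe; elim=> [|j IH]; rewrite ?muln0 // mulnS -frobnK xe IH. Qed.

Definition trq (x : K) : K := \sum_(i < 2 * n) x ^+ (q ^ i).

Lemma trq_is_zmod_morphism : zmod_morphism trq.
Proof.
move=> x y; rewrite /trq -sumrB; apply: eq_bigr => i _.
by rewrite !expq_frobn rmorphB.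
Qed.
HB.instance Definition _ := GRing.isZmodMorphism.Build K K trq trq_is_zmod_morphism.

Lemma Lpoly_is_zmod_morphism : zmod_morphism (Lpoly q a).
Proof.
move=> x y; rewrite /Lpoly -sumrB; apply: eq_bigr => i _.
by rewrite !expq_frobn rmorphB mulrBr.
Qed.
HB.instance Definition _ :=
  GRing.isZmodMorphism.Build K K (Lpoly q a) Lpoly_is_zmod_morphism.

Lemma Lstar_is_zmod_morphism : zmod_morphism (Lstar q a).
Proof.
move=> x y; rewrite /Lstar -sumrB; apply: eq_bigr => i _.
by rewrite !expq_frobn mulrBr rmorphB.
Qed.
HB.instance Definition _ :=
  GRing.isZmodMorphism.Build K K (Lstar q a) Lstar_is_zmod_morphism.

Lemma trq_frobq (x : K) : trq (frobq x) = trq x.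
Proof.
rewrite /trq; under eq_bigr => i _ do rewrite expq_frobn frobnK -mulnS.
under [in RHS]eq_bigr => i _ do rewrite expq_frobn.
apply: (@sumr_ord_shift _ (2 * n) (fun i => frobn pcharKp (k * i) x)).
by rewrite frobn_card muln0.
Qed.

Lemma frobq_trq (x : K) : frobq (trq x) = trq x.
Proof.
rewrite -{2}(trq_frobq x) /trq rmorph_sum; apply: eq_bigr => i _.
by rewrite /= !expq_frobn !frobnK addnC.
Qed.

Lemma trq_frobn s (x : K) : trq (frobn pcharKp (k * s) x) = trq x.
Proof. by elim: s => [|s IH]; rewrite ?muln0 // mulnSr -frobnK trq_frobq IH. Qed.

Lemma frobq_Tr_add_Tr (y : K) : frobq (Tr q n y) + Tr q n y = trq y.
Proof.
rewrite /trq mulnC (sumr_ord_mul n 2 (fun l => y ^+ (q ^ l))) /Tr rmorph_sum -big_split.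
apply: eq_bigr => i _; rewrite !big_ord_recl big_ord0 addr0 /= !expq_frobn frobnK addrC.
by congr (frobn pcharKp _ y + frobn pcharKp _ y); rewrite /bump /=; lia.
Qed.

Lemma rhoLE u : rhoL q a u = trq (u * Lpoly q a (frobq u)).
Proof. by rewrite /rhoL /sigmaL frobq_Tr_add_Tr. Qed.

(* The [i]-th terms match after applying [frobn (k * (2 (n - i - 1) + 1))],
   which fixes [trq]. *)
Lemma trq_Lpoly_adjoint u v :
  trq (v * Lpoly q a (frobq u)) = trq (u * Lstar q a (frobq v)).
Proof.
rewrite /Lpoly /Lstar !mulr_sumr !raddf_sum; apply: eq_bigr => i _.
rewrite /= !expq_frobn -(trq_frobn (2 * (n - i - 1)).+1 (v * _)) !rmorphM /= !frobnK.
have -> : (k + (k * (2 * i) + k * (2 * (n - i - 1)).+1) = k * (2 * n))%N.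
  by rewrite -mulnDr -mulnS; congr (k * _); have := ltn_ord i; lia.
rewrite frobn_card mulnSr addnC -frobnK.
by congr trq; rewrite mulrC [_ * u]mulrC mulrA.
Qed.

Definition LstarL (x : K) : K := Lstar q a x + Lpoly q a x.

Definition polar (u v : K) : K := trq (u * LstarL (frobq v)).

Lemma rhoLD u v : rhoL q a (u + v) = rhoL q a u + rhoL q a v + polar u v.
Proof.
rewrite !rhoLE /polar /LstarL rmorphD /= raddfD /= mulrDl !mulrDr !raddfD /=.
by rewrite (trq_Lpoly_adjoint u v); ring.
Qed.

Lemma polarDl u u' v : polar (u + u') v = polar u v + polar u' v.
Proof. by rewrite /polar mulrDl raddfD. Qed.

Lemma frobq_polar u v : frobq (polar u v) = polar u v. Proof. exact: frobq_trq. Qed.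

Lemma frobq_rhoL u : frobq (rhoL q a u) = rhoL q a u.
Proof. by rewrite rhoLE frobq_trq. Qed.

Section SubfieldScalars.
Variable c : K.
Hypothesis c_q2 : frobn pcharKp (k * 2) c = c.

Lemma Lpoly_mull x : Lpoly q a (c * x) = c * Lpoly q a x.
Proof.
rewrite /Lpoly mulr_sumr; apply: eq_bigr => i _.
by rewrite !expq_frobn rmorphM /= mulnA frobn_id_mul // mulrCA.
Qed.

Lemma Lstar_mull x : Lstar q a (c * x) = c * Lstar q a x.
Proof.
rewrite /Lstar mulr_sumr; apply: eq_bigr => i _.
by rewrite !expq_frobn mulrCA rmorphM /= mulnA frobn_id_mul.
Qed.

Lemma LstarL_mull x : LstarL (c * x) = c * LstarL x.
Proof. by rewrite /LstarL Lpoly_mull Lstar_mull mulrDr. Qed.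

Lemma frobq_q2 : frobn pcharKp (k * 2) (frobq c) = frobq c.
Proof. by rewrite frobnK addnC -frobnK c_q2. Qed.

End SubfieldScalars.

Lemma trq_mull d y : frobq d = d -> trq (d * y) = d * trq y.
Proof.
move=> dq; rewrite /trq mulr_sumr; apply: eq_bigr => i _.
by rewrite !expq_frobn rmorphM /= frobn_id_mul.
Qed.

Definition normq (c : K) : K := c * frobq c.

Lemma rhoL_mull c u :
  frobn pcharKp (k * 2) c = c -> rhoL q a (c * u) = normq c * rhoL q a u.
Proof.
move=> c_q2; rewrite !rhoLE rmorphM /= Lpoly_mull ?frobq_q2 //.
rewrite -trq_mull; first by congr trq; rewrite /normq; ring.
by rewrite /normq rmorphM /= frobnK addnn -muln2 c_q2 mulrC.
Qed.

Lemma absTr_trq y : absTr p k (trq y) = \sum_(l < 2 * n * k) frobn pcharKp l y.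
Proof.
rewrite /absTr /trq (sumr_ord_mul (2 * n) k (fun l => frobn pcharKp l y)) exchange_big /=.
apply: eq_bigr => j _; rewrite -/(frobn pcharKp j _) rmorph_sum /=; apply: eq_bigr => i _.
by rewrite expq_frobn frobnK mulnC.
Qed.

(* [absTr \o trq] is a polynomial map of degree [p ^ (2nk - 1) < #|K|]. *)
Lemma exists_absTr_trq_neq0 : exists y : K, absTr p k (trq y) != 0.
Proof.
set M := (2 * n * k)%N.
have M_gt0 : (0 < M)%N by rewrite !muln_gt0 n_gt0 k_gt0.
pose P : {poly K} := \sum_(l < M) 'X^(p ^ l).
have P_neq0 : P != 0.
  apply/eqP => P0; have : P`_(p ^ M.-1) = 1.
    rewrite coef_sum -(prednK M_gt0) big_ord_recr /= coefXn eqxx big1 ?add0r //.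
    move=> l _; rewrite coefXn eqn_exp2l ?prime_gt1 //.
    by rewrite gtn_eqF // (prednK M_gt0).
  by rewrite P0 coef0 => /eqP; rewrite eq_sym oner_eq0.
have sizeP : (size P <= (p ^ M.-1).+1)%N.
  apply: leq_trans (size_sum _ _ _) _; apply/bigmax_leqP => l _.
  rewrite size_polyXn ltnS leq_pexp2l ?prime_gt0 //.
  by rewrite -ltnS (prednK M_gt0).
have [|w _ Pw] := exists_nonroot P_neq0 (enum_uniq KF).
  have -> : size (enum KF : seq K) = #|KF| by rewrite cardT.
  rewrite (leq_trans sizeP) // card_K -expnM mulnC.
  by rewrite ltn_exp2l ?prime_gt1 // ltn_predL.
exists w; rewrite absTr_trq; apply: contra Pw => /eqP P0.
rewrite /root horner_sum -[X in _ == X]P0; apply/eqP/eq_bigr => l _; exact: hornerXn.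
Qed.

Lemma sum_psi_polar w : \sum_(v : KF) psi p k (polar v w) =
  if LstarL (frobq w) == 0 then (#|KF|%:R : algC) else 0.
Proof.
have psi0K := psi0 k p_pr pcharKp.
case: eqP => [LstarLw0 | /eqP LstarLw_neq0].
  by under eq_bigr => v _ do rewrite /polar LstarLw0 mulr0 raddf0 psi0K; rewrite sumr_const.
have [y absTr_y] := exists_absTr_trq_neq0.
set X := \sum_(v : KF) _; pose v0 : K := y / LstarL (frobq w).
have polar_v0 : polar v0 w = trq y by rewrite /polar /v0 divfK.
have X_psi_v0 : X = X * psi p k (polar v0 w).
  rewrite {1}/X (reindex_inj (addIr (v0 : KF))) /= mulr_suml.
  by apply: eq_bigr => v _; rewrite polarDl (psiD p_pr (frobq_polar _ _) (frobq_polar _ _)).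
have psi_v0 : psi p k (polar v0 w) != 1 by rewrite polar_v0 (psi_neq1 p_pr (frobq_trq y)).
apply/eqP; move/eqP: X_psi_v0; rewrite -subr_eq0 -{1}(mulr1 X) -mulrBr mulf_eq0.
by rewrite subr_eq0 [1 == _]eq_sym (negbTE psi_v0) orbF.
Qed.

Lemma rhoL_radical (c w : K) : frobn pcharKp (k * 2) c = c -> frobq c + c != 0 ->
  LstarL (frobq w) = 0 -> rhoL q a w = 0.
Proof.
move=> c_q2 c_tr LstarLw0.
have c1_q2 : frobn pcharKp (k * 2) (1 + c) = 1 + c by rewrite rmorphD rmorph1 /= c_q2.
have polar_cw : polar w (c * w) = 0.
  by rewrite /polar rmorphM /= LstarL_mull ?frobq_q2 // LstarLw0 !mulr0 raddf0.
have : normq (1 + c) * rhoL q a w = (1 + normq c) * rhoL q a w.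
  by rewrite -rhoL_mull // mulrDl mul1r rhoLD polar_cw addr0 rhoL_mull // mulrDl mul1r.
move/eqP; rewrite -subr_eq0 -mulrBl mulf_eq0 => /orP [|/eqP //].
suff -> : normq (1 + c) - (1 + normq c) = frobq c + c by rewrite (negbTE c_tr).
by rewrite /normq rmorphD rmorph1 /=; ring.
Qed.

Lemma frobn_q2_alg (c : F) : frobn pcharKp (k * 2) (c%:A : K) = c%:A.
Proof.
have cq2 : c ^+ (p ^ (k * 2)) = c by rewrite expnM -card_F expf_card.
by rewrite /frobn exprZn cq2 expr1n.
Qed.

Lemma LstarL_is_zmod_morphism : zmod_morphism LstarL.
Proof. by move=> x y; rewrite /LstarL !raddfB /=; ring. Qed.
HB.instance Definition _ := GRing.isZmodMorphism.Build K K LstarL LstarL_is_zmod_morphism.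

Lemma LstarL_is_scalable : scalable LstarL.
Proof.
move=> c x; rewrite -[c *: x]mulr_algl -[c *: LstarL x]mulr_algl.
by rewrite LstarL_mull // frobn_q2_alg.
Qed.
HB.instance Definition _ := GRing.isScalable.Build F K K *:%R LstarL LstarL_is_scalable.

Lemma card_radical :
  #|[set w : KF | LstarL (frobq w) == 0]| = (q ^ (2 * \dim (kerLL q a)))%N.
Proof.
have -> : [set w : KF | LstarL (frobq w) == 0] =
    (fun w : KF => frobq w : KF) @^-1: [set x : KF | x \in kerLL q a].
  by apply/setP => w; rewrite !inE memv_ker (_ : linfun _ = linfun LstarL) // lfunE.
rewrite card_preimset; last exact: (fmorph_inj frobq).
by rewrite cardsE (@card_vspace F KF (Vector.class KF)) card_F -expnM.
Qed.

Local Notation N := (q ^ (2 * n)).-1.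
Definition N_div_q2 : nat := (N %/ (q ^ 2).-1)%N.
Local Notation D := N_div_q2.

Lemma N_eq : N = ((q ^ 2).-1 * D)%N.
Proof. by rewrite [RHS]mulnC divnK // expnM dvdn_pred_predX. Qed.

Lemma predn_sqr_q : (q ^ 2).-1 = (q.-1 * q.+1)%N.
Proof. by rewrite -!subn1 -{2}(exp1n 2) subn_sqr addn1. Qed.

Lemma expq2n_eq : (q ^ (2 * n))%N = N.+1.
Proof. by rewrite prednK // expn_gt0 ltnW ?q_gt1. Qed.

Lemma N_gt0 : (0 < N)%N.
Proof.
rewrite -subn1 subn_gt0 -{1}(exp1n (2 * n)) ltn_exp2r ?q_gt1 //.
by rewrite muln_gt0.
Qed.

Lemma frobn_q2_unity (c : K) : c ^+ (q ^ 2).-1 = 1 -> frobn pcharKp (k * 2) c = c.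
Proof.
move=> c_unity; rewrite /frobn expnM -[(q ^ 2)%N]prednK ?expn_gt0 ?prime_gt0 //.
by rewrite exprS c_unity mulr1.
Qed.

Lemma expfN_eq1 (x : K) : x != 0 -> x ^+ N = 1.
Proof.
move=> x_neq0; apply: (mulfI x_neq0); rewrite mulr1 -exprS -expq2n_eq.
by rewrite expq_frobn frobn_card.
Qed.

Lemma exists_prim_root : exists z : K, N.-primitive_root z.
Proof.
pose rs : seq K := enum [pred x : KF | x != 0].
have rs_unity : all N.-unity_root rs.
  apply/allP => x x_rs; rewrite unity_rootE; apply/eqP/expfN_eq1.
  have : (x : KF) \in enum [pred y : KF | y != 0] := x_rs.
  by rewrite mem_enum.
have size_rs : (N <= size rs)%N.
  have -> : size rs = #|[pred x : KF | x != 0]| by rewrite cardE.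
  by rewrite (cardC1 (0 : KF)) card_K expq2n_eq.
have [z _ z_prim] := hasP (has_prim_root N_gt0 rs_unity (enum_uniq _) size_rs).
by exists z.
Qed.

Section Generator.
Variable z : K.
Hypothesis z_prim : N.-primitive_root z.

Lemma z_neq0 : z != 0.
Proof. by rewrite (prim_root_eq0 z_prim) -lt0n N_gt0. Qed.

Lemma D_gt0 : (0 < D)%N.
Proof. by have := N_gt0; rewrite N_eq muln_gt0 => /andP []. Qed.

Lemma frobn_q2_expzD j : frobn pcharKp (k * 2) (z ^+ (D * j)) = z ^+ (D * j).
Proof.
apply: frobn_q2_unity; rewrite -exprM (_ : (D * j * _ = N * j)%N).
  by rewrite exprM (prim_expr_order z_prim) expr1n.
by rewrite mulnAC [(D * _)%N]mulnC -N_eq.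
Qed.

Lemma sum_nonzero_expz (f : K -> algC) :
  \sum_(u : KF | u != 0) f u = \sum_(i < N) f (z ^+ i).
Proof.
have expz_inj : injective (fun i : 'I_N => (z ^+ i : KF)).
  move=> i j /eqP; rewrite (eq_prim_root_expr z_prim) !modn_small //.
  by move/eqP/val_inj.
transitivity (\sum_(u in [set (z ^+ i : KF) | i : 'I_N]) f u); last first.
  by rewrite big_imset //; exact: in2W.
apply: eq_bigl => u; apply/idP/imsetP.
  by move=> /expfN_eq1 /(prim_rootP z_prim) [i ->]; exists i.
by case=> i _ ->; rewrite expf_neq0 // z_neq0.
Qed.

(* [z ^+ ((q - 1) D)] has order [q + 1], hence norm 1 and leaves [rhoL] invariant. *)
Lemma sum_psi_rhoL_orbits :
  \sum_(u : KF) psi p k (rhoL q a u) =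
  1 + (\sum_(i < q.-1 * D) psi p k (rhoL q a (z ^+ i))) *+ q.+1.
Proof.
rewrite (bigD1 (0 : KF)) //= rhoLE mul0r raddf0 (psi0 k p_pr pcharKp); congr (1 + _).
rewrite sum_nonzero_expz -(big_mkord xpredT (fun i => psi p k (rhoL q a (z ^+ i)))).
rewrite N_eq predn_sqr_q mulnAC mulnC big_mkord.
apply: (@sumr_ord_periodic _ _ _ (fun i => psi p k (rhoL q a (z ^+ i)))) => i /=.
rewrite exprD mulrC [(_ * D)%N]mulnC rhoL_mull ?frobn_q2_expzD //.
suff -> : normq (z ^+ (D * q.-1)) = 1 by rewrite mul1r.
rewrite /normq /frobn -exprS -exprM -mulnA -predn_sqr_q mulnC -N_eq.
exact: prim_expr_order.
Qed.

Lemma exists_normq_eqN1 :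
  exists c : K, [/\ c != 0, frobn pcharKp (k * 2) c = c & normq c = -1].
Proof.
have [p2 | p_odd] := even_prime p_pr.
  exists 1; split; rewrite ?oner_neq0 ?rmorph1 // /normq rmorph1 mulr1.
  by apply/eqP; rewrite -addr_eq0 -[1 + 1]/(2%:R : K) -p2 (pcharf0 pcharKp).
have q_odd : odd q by rewrite oddX p_odd orbT.
pose h := (q.-1)./2.
have q1_h : q.-1 = h.*2.
  by rewrite -[LHS]odd_double_half -subn1 oddB ?expn_gt0 ?prime_gt0 // q_odd /= subn1.
exists (z ^+ (D * h)); split; rewrite ?expf_neq0 ?z_neq0 ?frobn_q2_expzD //.
rewrite /normq /frobn -exprS -exprM; set e := z ^+ _.
have DhN : (D * h * q.+1 * 2 = N)%N by rewrite N_eq predn_sqr_q q1_h -muln2; ring.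
have e_sqr : e ^+ 2 = 1 by rewrite /e -exprM DhN prim_expr_order.
have e_neq1 : e != 1.
  have h_gt0 : (0 < h)%N by have := q_gt1; lia.
  have m_gt0 : (0 < D * h * q.+1)%N by rewrite !muln_gt0 D_gt0 h_gt0.
  rewrite /e -(prim_order_dvd z_prim) -DhN.
  by apply/negP => /(dvdn_leq m_gt0); rewrite leqNgt ltn_Pmulr.
by move/eqP: e_sqr; rewrite sqrf_eq1 (negbTE e_neq1) => /eqP.
Qed.

Lemma frobq_expzD_add_neq0 : frobq (z ^+ D) + z ^+ D != 0.
Proof.
set c := z ^+ D; apply/negP => /eqP c_tr0.
have c_neq0 : c != 0 by rewrite expf_neq0 // z_neq0.
have c_q1 : c ^+ q.-1 = -1.
  apply: (mulIf c_neq0); rewrite -exprSr prednK ?expn_gt0 ?prime_gt0 // mulN1r.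
  by apply/eqP; rewrite -addr_eq0; apply/eqP.
have : z ^+ (D * (q.-1 * 2)) = 1 by rewrite !exprM c_q1 sqrrN expr1n.
move/eqP; rewrite -(prim_order_dvd z_prim) N_eq predn_sqr_q [(_ * D)%N]mulnC.
have q1_gt0 : (0 < q.-1)%N by have := q_gt1; lia.
rewrite dvdn_pmul2l ?D_gt0 // dvdn_pmul2l // => /dvdn_leq.
by move=> /(_ isT); rewrite ltnNge q_gt1.
Qed.

End Generator.

Local Notation S := (\sum_(u : KF) psi p k (rhoL q a u)).

(* Substitute [u := c u] with [normq c = -1] in one factor and [u := v + w] in the other. *)
Lemma sqr_sum_psi_rhoL :
  S ^+ 2 = \sum_(w : KF) psi p k (rhoL q a w) * \sum_(v : KF) psi p k (polar v w).
Proof.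
have [z z_prim] := exists_prim_root.
have [c [c_neq0 c_q2 c_norm]] := exists_normq_eqN1 z_prim.
have S_opp : S = \sum_(v : KF) psi p k (- rhoL q a v).
  rewrite (reindex_inj (mulfI (c_neq0 : (c : KF) != 0))) /=.
  by apply: eq_bigr => v _; rewrite rhoL_mull // c_norm mulN1r.
rewrite expr2 {1}S_opp mulr_suml.
transitivity (\sum_(v : KF) \sum_(w : KF) psi p k (rhoL q a w) * psi p k (polar v w)).
  apply: eq_bigr => v _; rewrite mulr_sumr (reindex_inj (addrI (v : KF))) /=.
  apply: eq_bigr => w _; have rhoN_q : frobq (- rhoL q a v) = - rhoL q a v.
    by rewrite rmorphN /= frobq_rhoL.
  rewrite -(psiD p_pr rhoN_q (frobq_rhoL _)) rhoLD.
  have -> : - rhoL q a v + (rhoL q a v + rhoL q a w + polar v w) =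
    rhoL q a w + polar v w by ring.
  by rewrite (psiD p_pr (frobq_rhoL w) (frobq_polar v w)).
by rewrite exchange_big; apply: eq_bigr => w _; rewrite mulr_sumr.
Qed.

Lemma sum_psi_rhoL_sqr : S ^+ 2 = (q ^ (2 * n) * q ^ (2 * \dim (kerLL q a)))%:R.
Proof.
have [z z_prim] := exists_prim_root.
have zD_q2 := frobn_q2_expzD z_prim 1; rewrite muln1 in zD_q2.
have rhoL_rad := rhoL_radical zD_q2 (frobq_expzD_add_neq0 z_prim).
rewrite sqr_sum_psi_rhoL; under eq_bigr => w _ do rewrite sum_psi_polar.
rewrite (bigID (fun w : KF => LstarL (frobq w) == 0)) /=.
rewrite [X in _ + X]big1 ?addr0 => [|w /negbTE ->]; last by rewrite mulr0.
rewrite (eq_bigr (fun=> (#|KF|%:R : algC))); last first.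
  by move=> w /[dup] /eqP /rhoL_rad -> ->; rewrite (psi0 k p_pr pcharKp) mul1r.
rewrite sumr_const -mulrnA card_K -card_radical; congr (_ * _)%:R.
by apply: eq_card => w; rewrite inE.
Qed.

Lemma sum_psi_rhoL_eq1_mod : (S == 1 %[mod q.+1])%A.
Proof.
have [z z_prim] := exists_prim_root; rewrite (sum_psi_rhoL_orbits z_prim).
rewrite -mulr_natr addrC; apply: eqAmod_addl_mul.
by apply: rpred_sum => i _; apply: psi_Aint.
Qed.

End QuadraticForm.

Theorem theorem3p2 (F : finFieldType) (K : fieldExtType F) (p k n : nat)
    (hp : prime p) (hchar : p \in [pchar F]) (hk : (0 < k)%N) (hn : (0 < n)%N)
    (hF : #|F| = ((p ^ k) ^ 2)%N) (hdim : \dim {: K} = n)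
    (a : 'I_n -> K) :
  let q := (p ^ k)%N in
  let r := (n - \dim (kerLL q a))%N in
  \sum_(u : finvect_type K) psi p k (rhoL q a u) = (-1) ^+ r * ((q ^ (2 * n - r))%N)%:R.
Proof.
move=> q r; set d := \dim (kerLL q a) in r *.
have d_le_n : (d <= n)%N by rewrite -hdim dimvS ?subvf.
have -> : (-1) ^+ r * (q ^ (2 * n - r))%:R = (- q%:R) ^+ (n + d) :> algC.
  have -> : (2 * n - r = n + d)%N by rewrite /r; lia.
  rewrite [RHS]exprNn natrX; congr (_ * _).
  have -> : (n + d = r + 2 * d)%N by rewrite /r; lia.
  by rewrite exprD exprM sqrrN !expr1n mulr1.
apply: Aint_sqr_eq_sign (q_gt1 hp hk) (sum_psi_rhoL_eq1_mod hp hchar hk hn hF hdim a) _.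
rewrite (sum_psi_rhoL_sqr hp hchar hk hn hF hdim a) -natrX -expnD -[in RHS]expnM.
by congr (_ ^ _)%:R; rewrite /d /q; lia.
Qed.
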